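(* Let $(H_i)_{i=0}^\infty = (2^{\alpha_i}3^{\beta_i})_{i=0}^\infty$ be the increasing enumeration of $\mathcal{H}=\{2^\alpha3^\beta : \alpha,\beta\in\mathbb{N}_0\}$, and define $f\colon\mathbb{N}_0\to\{+1,-1\}$ by $f(0)=+1$ and $f(n)=(-1)^{\alpha_i+\beta_i}$ for $n\in\{H_i,H_i+1,\dots,H_{i+1}-1\}$, $i\in\mathbb{N}_0$. Then for almost all $n\in\mathbb{N}_0$ we have $f(n+1)=f(n)$, $f(2n)=-f(n)$ and $f(3n)=-f(n)$.
   Context: $\mathbb{N}_0=\{0,1,2,\dots\}$. A property holds for almost all $n\in\mathbb{N}_0$ if the set of $n$ where it fails has upper density $\limsup_{N\to\infty}|\cdot\cap\{0,\dots,N-1\}|/N$ equal to $0$. *)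

From mathcomp Require Import all_boot all_order all_algebra.
From mathcomp Require Import all_classical all_reals all_analysis.
Set Implicit Arguments. Unset Strict Implicit. Unset Printing Implicit Defensive.
Import Order.TTheory GRing.Theory Num.Theory.
Local Open Scope ring_scope.

Definition three_smooth (n : nat) : Prop :=
  exists a b : nat, n = (2 ^ a * 3 ^ b)%N.

(* Upper density of A ⊆ N_0: limsup_{N->oo} |A ∩ {0,...,N-1}| / N
   (for N = 0 the quotient is 0 by MathComp's convention x/0 = 0,
   which does not affect the limsup). *)
Definition upper_density (R : realType) (A : pred nat) : R :=
  limn_sup (fun N : nat => (count A (iota 0 N))%:R / N%:R).

Definition almost_all (R : realType) (P : pred nat) : Prop :=
  upper_density R [pred n | ~~ P n] = 0.

From mathcomp Require Import all_boot all_order all_algebra.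
From mathcomp Require Import all_classical all_reals all_analysis.
From mathcomp Require Import zify.
Import Order.TTheory GRing.Theory Num.Theory.
Local Open Scope ring_scope.

(* Let n lie in the block [H_i, H_(i+1)).  If f(n+1) <> f(n), then n+1 is
   3-smooth, and only O(log^2 N) numbers below N are.  If f(pn) <> -f(n) for
   p in {2, 3}, the block containing pn cannot start at a multiple of p (it
   would start at p H_i, and the sign would flip), so it starts at a power q^b
   of the other prime, and pn lies before the next smooth number after q^b.
   Since log 3 / log 2 is irrational, pigeonhole gives, for every K, powers
   with q^c < p^a < (1 + 1/K) q^c; then q^(b-c) p^a is smooth, so pn lies in
   [q^b, (1 + 1/K) q^b).  Below N these windows contain O(N/K) numbers. *)

Section Sparse.
Local Open Scope nat_scope.
Set Implicit Arguments.
Unset Strict Implicit.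

(* Integer form of having upper density 0. *)
Definition sparse (A : pred nat) :=
  forall K, exists C, forall N, K * count A (iota 0 N) <= N + C.

Lemma sparse_linear (A : pred nat) B :
  (forall K, 0 < K -> exists C, forall N, K * count A (iota 0 N) <= B * N + C) ->
  sparse A.
Proof.
move=> hA [|K]; first by exists 0.
have [C hC] := hA (K.+1 * B.+1) (ltn0Sn _).
exists C => N; rewrite -(leq_pmul2l (ltn0Sn B)) mulnA (mulnC B.+1).
apply: leq_trans (hC N) _; rewrite mulnDr leq_add ?leq_pmull //.
by rewrite leq_mul2r leqnSn orbT.
Qed.

Lemma sparse_sub (A B : pred nat) : {subset A <= B} -> sparse B -> sparse A.
Proof.
move=> AB hB K; have [C hC] := hB K; exists C => N.
by apply: leq_trans (hC N); rewrite leq_mul2l sub_count ?orbT.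
Qed.

Lemma sparseU (A B : pred nat) : sparse A -> sparse B -> sparse (predU A B).
Proof.
move=> hA hB K; have [CA hCA] := hA K.*2; have [CB hCB] := hB K.*2.
exists (CA + CB) => N; rewrite -leq_double -!mul2n mulnA.
apply: leq_trans (_ : 2 * K * (count A (iota 0 N) + count B (iota 0 N)) <= _).
  by rewrite leq_mul2l -count_predUI leq_addr orbT.
by rewrite mulnDr mul2n; move: (hCA N) (hCB N); rewrite -mul2n; lia.
Qed.

End Sparse.

Lemma upper_density_sparse (R : realType) (A : pred nat) :
  sparse A -> upper_density R A = 0.
Proof.
move=> hA; apply: (cvg_limn_inf_sup _).2; apply/cvgrPdist_lt => e e_gt0.
pose K := (Num.truncn (2 / e)).+1.
have [C hC] := hA K.
have K_gt : 2 / e < K%:R by exact: truncnS_gt.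
exists C.+1 => // N /= CN.
have N_gt0 : (0 < N)%N by case: N CN.
have count_le : (count A (iota 0 N) * K <= 2 * N)%N by move: (hC N); rewrite mulnC; lia.
rewrite sub0r normrN ger0_norm ?divr_ge0 ?ler0n // ltr_pdivrMr ?ltr0n //.
rewrite -(@ltr_pM2r _ K%:R) ?ltr0n //.
apply: (le_lt_trans (y := 2 * N%:R)); first by move: count_le; rewrite -(ler_nat R) !natrM.
by rewrite mulrAC ltr_pM2r ?ltr0n // mulrC -ltr_pdivrMr.
Qed.

Section Counting.
Local Open Scope nat_scope.
Set Implicit Arguments.
Unset Strict Implicit.

Lemma count_le_window (T : eqType) (P : pred T) (g : T -> nat) (s : seq T) lo d :
  uniq s -> injective g -> (forall x, x \in s -> P x -> lo <= g x < lo + d) ->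
  count P s <= d.
Proof.
move=> s_uniq g_inj gP; rewrite -size_filter -(size_map g) -(size_iota lo d).
apply: uniq_leq_size => [|_ /mapP[x + ->]]; first by rewrite map_inj_uniq ?filter_uniq.
by rewrite mem_filter mem_iota => /andP[Px xs]; apply: gP.
Qed.

Lemma sub_in_count (T : eqType) (a1 a2 : pred T) (s : seq T) :
  {in s, subpred a1 a2} -> count a1 s <= count a2 s.
Proof.
elim: s => //= x s IHs sub12; rewrite leq_add ?IHs // => [|y ys]; last first.
  by apply: sub12; rewrite inE ys orbT.
by case: (boolP (a1 x)) => //= /(sub12 x (mem_head x s)) ->.
Qed.

Lemma count_has_le_sum (T I : Type) (P : I -> pred T) (r : seq I) (s : seq T) :
  count (fun x => has (P^~ x) r) s <= \sum_(i <- r) count (P i) s.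
Proof.
elim: r => [|i r IHr]; first by rewrite big_nil; elim: s.
rewrite big_cons; apply: leq_trans (leq_add (leqnn _) IHr); rewrite -count_predUI.
by apply: leq_trans (leq_addr _ _); apply: sub_count => x /=.
Qed.

Lemma sum_expn_lt q n : 1 < q -> \sum_(b < n) q ^ b < q ^ n.
Proof.
move=> q_gt1; have := predn_exp q n; rewrite -subn1 => sum_eq.
have : \sum_(b < n) q ^ b <= q.-1 * \sum_(b < n) q ^ b.
  by rewrite leq_pmull // -subn1 subn_gt0.
by rewrite -sum_eq; have := expn_gt0 q n; rewrite (ltnW q_gt1); lia.
Qed.

Lemma exp2_dominates_sq K : exists C, forall t, K * t.+1 ^ 2 <= 2 ^ t + C.
Proof.
exists (K * (27 * K) ^ 2) => t.
set X := 2 ^ (t %/ 3).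
have tX : t.+1 <= 3 * X.
  have := ltn_expl (t %/ 3) (ltnSn 1); have := divn_eq t 3.
  by have := ltn_pmod t (isT : 0 < 3); rewrite -/X; lia.
have X3 : X ^ 3 <= 2 ^ t by rewrite -expnM leq_exp2l // leq_trunc_div.
case: (leqP (9 * K) X) => [KX|XK].
  apply: leq_trans (leq_addr _ _); apply: leq_trans X3.
  have : K * t.+1 ^ 2 <= K * (3 * X) ^ 2 by rewrite leq_mul2l leq_sqr tX orbT.
  by move: KX; nia.
by apply: leq_trans (leq_addl _ _); rewrite leq_mul2l leq_sqr; lia.
Qed.

End Counting.

Section CloseRatios.
Local Open Scope nat_scope.
Set Implicit Arguments.
Unset Strict Implicit.

Definition close_above K x y := (y < x) && (K * x < K.+1 * y).

Lemma close_aboveW K r x y : K <= r -> close_above r x y -> close_above K x y.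
Proof.
move=> Kr /andP[yx rxy]; rewrite /close_above yx /=.
have : K * (x - y) <= r * (x - y) by rewrite leq_mul2r Kr orbT.
have : K * y <= K * x by rewrite leq_mul2l ltnW ?orbT.
have : r * y <= r * x by rewrite leq_mul2l ltnW ?orbT.
by move: rxy; rewrite !mulnBr !mulSn; lia.
Qed.

Lemma divn_close x y P Q : 0 < y -> 0 < P -> 0 < Q -> P != Q ->
  x %/ y = x * P %/ (y * Q) -> close_above (x %/ y) P Q || close_above (x %/ y) Q P.
Proof.
set r := x %/ y => y_gt0 P_gt0 Q_gt0 PQ r_eq.
have lo1 : r * y <= x := leq_trunc_div x y.
have hi1 : x < r.+1 * y := ltn_ceil x y_gt0.
have lo2 : r * (y * Q) <= x * P by rewrite r_eq leq_trunc_div.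
have hi2 : x * P < r.+1 * (y * Q) by rewrite r_eq ltn_ceil ?muln_gt0 ?y_gt0.
rewrite /close_above; case: ltngtP PQ => // [QP|PQ] _ /=; rewrite ?orbF -(ltn_pmul2r y_gt0).
- have : r * y * P <= x * P by rewrite leq_mul2r lo1 orbT.
  by move: hi2; lia.
- have : x * P < r.+1 * y * P by rewrite ltn_mul2r hi1 P_gt0.
  by move: lo2; lia.
Qed.

Lemma bernoulli_expn v j : v ^ j * (v + j) <= v.+1 ^ j * v.
Proof.
elim: j => [|j IHj]; first by rewrite !expn0 addn0.
rewrite !expnS -mulnA (mulnC v.+1) mulnA.
have : v * (v + j.+1) <= v.+1 * (v + j) by nia.
by move: IHj; set a := v ^ j; set b := v.+1 ^ j; nia.
Qed.

(* Stop at the last j before (u / v)^j reaches m: then 1 < m v^j / u^j < u / v. *)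
Lemma close_above_expn K m u v : 1 < m -> close_above K u v ->
  exists j, close_above K (m * v ^ j) (u ^ j).
Proof.
move=> m_gt1 /andP[vu Kuv].
have v_gt0 : 0 < v by move: Kuv; case: v {vu} => //; rewrite muln0 ltn0.
have ex_j : exists j, m * v ^ j <= u ^ j.
  exists (m * v); apply: leq_trans (_ : v.+1 ^ (m * v) <= _); last first.
    by rewrite leq_exp2r ?muln_gt0 ?v_gt0 ?(ltnW m_gt1).
  rewrite -(leq_pmul2r v_gt0); apply: leq_trans (bernoulli_expn _ _).
  by rewrite mulnAC [leqRHS]mulnC leq_mul2r leq_addl orbT.
case: (ex_minnP ex_j) => -[|i]; first by rewrite !expn0 muln1 leqNgt m_gt1.
move=> m_le min_j; have ui_lt : u ^ i < m * v ^ i.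
  by rewrite ltnNge; apply/negP => /min_j; rewrite ltnn.
exists i; rewrite /close_above ui_lt /= -(ltn_pmul2r v_gt0).
apply: (@leq_ltn_trans (K * u ^ i.+1)).
  by rewrite -mulnA leq_mul2l -mulnA -expnSr m_le orbT.
have : u ^ i * (K * u) < u ^ i * (K.+1 * v).
  by rewrite ltn_pmul2l // expn_gt0 (leq_ltn_trans _ vu).
by rewrite expnS; lia.
Qed.

Lemma count_close_window K p T Z W (s : seq nat) : uniq s -> 0 < p ->
  close_above K W Z -> K <= T ->
  K * count [pred n | (T <= p * n) && (p * n * Z < T * W)] s <= 2 * T.
Proof.
move=> s_uniq p_gt0 /andP[ZW KWZ] KT.
case: (posnP K) => [->|K_gt0]; first by rewrite mul0n.
have Z_gt0 : 0 < Z by move: KWZ; case: Z {ZW} => //; rewrite muln0 ltn0.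
have count_le : count [pred n | (T <= p * n) && (p * n * Z < T * W)] s <= T %/ K + 1.
  apply: (count_le_window (g := muln p) (lo := T)) => // [|n _ /andP[Tpn pnZ]].
    by move=> x y /eqP; rewrite eqn_pmul2l // => /eqP.
  rewrite Tpn /= addn1 addnS ltnS -leq_subLR leq_divRL //.
  have : K * (p * n) * Z < K.+1 * T * Z.
    have : K * (p * n * Z) <= K * (T * W) by rewrite leq_mul2l ltnW ?orbT.
    have : T * (K * W) < T * (K.+1 * Z) by rewrite ltn_pmul2l ?(leq_trans K_gt0 KT).
    lia.
  by rewrite ltn_pmul2r // mulnC mulnBl; lia.
apply: leq_trans (leq_mul (leqnn K) count_le) _.
by rewrite mulnDr muln1 mul2n -addnn leq_add // mulnC leq_trunc_div.
Qed.

End CloseRatios.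

Section SmoothNumbers.
Local Open Scope nat_scope.
Set Implicit Arguments.
Unset Strict Implicit.

Definition smooth p q n := exists a b, n = p ^ a * q ^ b.

Lemma smoothC p q n : smooth p q n <-> smooth q p n.
Proof. by split=> -[a [b ->]]; exists b, a; rewrite mulnC. Qed.

Lemma smooth_gt0 p q n : 0 < p -> 0 < q -> smooth p q n -> 0 < n.
Proof. by move=> p_gt0 q_gt0 [a [b ->]]; rewrite muln_gt0 !expn_gt0 p_gt0 q_gt0. Qed.

Lemma logn_smooth p q a b : prime p -> prime q -> p != q -> logn p (p ^ a * q ^ b) = a.
Proof.
move=> p_prime q_prime p_neq_q; rewrite lognM ?expn_gt0 ?prime_gt0 //.
by rewrite !lognX !logn_prime // eqxx (negPf p_neq_q) muln1 muln0 addn0.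
Qed.

Lemma expn_prime_neq p q D E : prime p -> prime q -> p != q -> 0 < D -> p ^ D != q ^ E.
Proof.
move=> p_prime q_prime p_neq_q; apply: contraTneq => /(congr1 (logn p)).
by rewrite !lognX !logn_prime // eqxx (negPf p_neq_q) muln1 muln0 => ->.
Qed.

Lemma sparse_smooth_succ p q (P : pred nat) : 1 < p -> 1 < q ->
  (forall n, P n -> smooth p q n.+1) -> sparse P.
Proof.
move=> p_gt1 q_gt1 P_smooth K; have [C hC] := exp2_dominates_sq K; exists C.
case=> [|N]; first by rewrite muln0.
set t := trunc_log 2 N.+1.
have exp2_le x e : 1 < x -> 2 ^ e <= x ^ e by case: e => // e x_gt1; rewrite leq_exp2r.
have count_le : count P (iota 0 N.+1) <= t.+1 ^ 2.
  rewrite -size_filter -mulnn -(size_iota 0 t.+1).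
  rewrite -(size_allpairs (fun a b => (p ^ a * q ^ b).-1)).
  apply: uniq_leq_size => [|n]; first by rewrite filter_uniq ?iota_uniq.
  rewrite mem_filter mem_iota => /andP[/P_smooth[a [b ab]] /andP[_ nN]].
  have le_t e x : 1 < x -> x ^ e <= n.+1 -> e \in iota 0 t.+1.
    move=> x_gt1 le_n; rewrite mem_iota ltnS trunc_log_max //.
    by apply: leq_trans (exp2_le _ _ x_gt1) (leq_trans le_n nN).
  apply/allpairsP; exists (a, b); split => /=; last by rewrite -ab.
    by apply: (le_t a p) => //; rewrite ab leq_pmulr ?expn_gt0 ?(ltnW q_gt1).
  by apply: (le_t b q) => //; rewrite ab leq_pmull ?expn_gt0 ?(ltnW p_gt1).
apply: leq_trans (leq_mul (leqnn K) count_le) _; apply: leq_trans (hC t) _.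
by rewrite leq_add2r trunc_logP.
Qed.

End SmoothNumbers.

Section TwoPrimes.
Local Open Scope nat_scope.
Set Implicit Arguments.
Unset Strict Implicit.

Variables p q : nat.
Hypotheses (p_prime : prime p) (q_prime : prime q) (p_neq_q : p != q).

(* Pigeonhole: the (q - 1) K + 1 quotients K p^c / q^t with q^t <= p^c < q^(t+1),
   for c <= (q - 1) K, lie in [K, q K); two of them agree, and [divn_close]. *)
Lemma exists_close_powers_either K : 0 < K ->
  exists D E, close_above K (p ^ D) (q ^ E) || close_above K (q ^ E) (p ^ D).
Proof.
move=> K_gt0; have q_gt1 := prime_gt1 q_prime; have p_gt0 := prime_gt0 p_prime.
pose t c := trunc_log q (p ^ c).
pose r c := K * p ^ c %/ q ^ t c.
have r_range c : K <= r c < K + q.-1 * K.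
  have lo : q ^ t c <= p ^ c by rewrite trunc_logP // expn_gt0 p_gt0.
  have hi := trunc_log_ltn (p ^ c) q_gt1.
  rewrite leq_divRL ?ltn_divLR ?expn_gt0 ?(ltnW q_gt1) // leq_mul2l lo orbT /=.
  by rewrite -mulSn prednK ?(ltnW q_gt1) // (mulnC q) -mulnA ltn_mul2l K_gt0 -expnS.
have : ~~ uniq [seq r c | c <- iota 0 (q.-1 * K).+1].
  apply/negP => /(@uniq_leq_size _ _ (iota K (q.-1 * K))).
  rewrite !size_map !size_iota ltnn => le_size; suff : false by [].
  by apply: le_size => _ /mapP[c _ ->]; rewrite mem_iota r_range.
case/(uniqPn 0) => i [j [ij]]; rewrite size_map size_iota => j_lt.
rewrite !(nth_map 0) ?size_iota ?(ltn_trans ij) // !nth_iota ?(ltn_trans ij) //.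
rewrite !add0n => r_ij.
have t_ij : t i <= t j by apply/leq_trunc_log/leq_pexp2l/ltnW.
exists (j - i), (t j - t i).
have := @divn_close (K * p ^ i) (q ^ t i) (p ^ (j - i)) (q ^ (t j - t i)).
rewrite !expn_gt0 p_gt0 (ltnW q_gt1) expn_prime_neq ?subn_gt0 //.
rewrite -mulnA -!expnD !subnKC ?(ltnW ij) // => /(_ isT isT isT isT r_ij).
have /andP[K_le_ri _] := r_range i.
by case/orP=> /(close_aboveW K_le_ri) ->; rewrite ?orbT.
Qed.

Lemma exists_close_powers K : 0 < K -> exists a c, close_above K (p ^ a) (q ^ c).
Proof.
move=> /exists_close_powers_either[D [E /orP[pq_close|qp_close]]]; first by exists D, E.
have [j] := close_above_expn (prime_gt1 p_prime) qp_close.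
by exists (D * j).+1, (E * j); rewrite expnS !expnM.
Qed.

(* With q^c < p^a < (1 + 1/K) q^c, the smooth number q^(b-c) p^a bounds p n,
   which thus lies in [window b]; the sizes of the windows below p N add up to
   a geometric series. *)
Lemma sparse_before_next_smooth (P : pred nat) :
  (forall n, 0 < n -> P n ->
     exists b, q ^ b <= p * n /\ forall h, smooth p q h -> q ^ b < h -> p * n < h) ->
  sparse P.
Proof.
move=> P_window; apply: (@sparse_linear _ (2 * (q * p))) => K K_gt0.
have [p_gt0 q_gt1] := (prime_gt0 p_prime, prime_gt1 q_prime).
have [a [c ac_close]] := exists_close_powers K_gt0.
have /andP[qc_lt_pa _] := ac_close.
pose M := K + q ^ c.
pose window b :=
  [pred n | (K <= q ^ b) && (q ^ b <= p * n) && (p * n * q ^ c < q ^ b * p ^ a)].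
exists (K * M) => -[|N]; first by rewrite /= muln0.
pose B := (trunc_log q (p * N.+1)).+1.
have cover : {in iota 0 N.+1,
    subpred P [pred n | (n < M) || has (window^~ n) (index_iota 0 B)]}.
  move=> n; rewrite mem_iota add0n => /andP[_ nN] Pn; apply/orP.
  case: (ltnP n M) => Mn; [by left | right].
  have [b [qb_le next]] := P_window n (leq_trans (ltn_addr _ K_gt0) Mn) Pn.
  have n_lt : n < q ^ b.
    rewrite -(ltn_pmul2l p_gt0) next //; first by exists 1, b; rewrite expn1.
    by rewrite ltn_Pmull ?prime_gt1 ?expn_gt0 ?(ltnW q_gt1).
  have c_lt : c < b.
    by rewrite -(ltn_exp2l _ _ q_gt1) (leq_ltn_trans _ n_lt) // (leq_trans _ Mn) ?leq_addl.
  have qb_split : q ^ b = q ^ (b - c) * q ^ c by rewrite -expnD subnK // ltnW.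
  have pn_lt : p * n < q ^ (b - c) * p ^ a.
    apply: next; first by exists a, (b - c); rewrite mulnC.
    by rewrite qb_split ltn_pmul2l ?expn_gt0 ?(ltnW q_gt1).
  apply/hasP; exists b.
    by rewrite mem_index_iota ltnS trunc_log_max // (leq_trans qb_le) // leq_mul2l ltnW ?orbT.
  rewrite /= qb_le (leq_trans (leq_trans (leq_addr _ _) Mn) (ltnW n_lt)) /=.
  by rewrite qb_split [X in _ < X]mulnAC ltn_pmul2r ?expn_gt0 ?(ltnW q_gt1).
have count_window b : K * count (window b) (iota 0 N.+1) <= 2 * q ^ b.
  case: (leqP K (q ^ b)) => [Kqb | qbK].
    apply: leq_trans (count_close_window (iota_uniq 0 N.+1) p_gt0 ac_close Kqb).
    by rewrite leq_mul2l sub_count ?orbT // => n /=; rewrite Kqb.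
  by rewrite (@eq_count _ _ pred0) ?count_pred0 ?muln0 // => n /=; rewrite leqNgt qbK.
have count_small : count (fun n => n < M) (iota 0 N.+1) <= M.
  by apply: (count_le_window (g := id) (lo := 0) (iota_uniq 0 N.+1)) => // n _ /=.
have count_windows : K * count (fun n => has (window^~ n) (index_iota 0 B)) (iota 0 N.+1)
    <= 2 * (q * p) * N.+1.
  apply: leq_trans (leq_mul (leqnn K) (count_has_le_sum _ _ _)) _.
  rewrite big_distrr /=.
  apply: leq_trans (_ : _ <= \sum_(0 <= b < B) 2 * q ^ b) _.
    by apply: leq_sum => b _; apply: count_window.
  rewrite -big_distrr /= big_mkord -mulnA leq_mul2l; apply/orP; right.
  apply: ltnW (leq_trans (sum_expn_lt _ q_gt1) _).
  by rewrite expnS -mulnA leq_mul2l trunc_logP ?muln_gt0 ?p_gt0 ?orbT.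
apply: leq_trans (leq_mul (leqnn K) (sub_in_count cover)) _.
apply: leq_trans (leq_mul (leqnn K) (_ : _ <= count (fun n => n < M) (iota 0 N.+1) +
  count (fun n => has (window^~ n) (index_iota 0 B)) (iota 0 N.+1))) _.
  by rewrite -count_predUI leq_addr.
by rewrite mulnDr addnC leq_add // leq_mul2l count_small orbT.
Qed.

End TwoPrimes.

Section Enumeration.
Local Open Scope nat_scope.
Set Implicit Arguments.
Unset Strict Implicit.

Variables (p q : nat) (H alpha beta : nat -> nat) (f : nat -> int).
Hypotheses (p_prime : prime p) (q_prime : prime q) (p_neq_q : p != q).
Hypothesis H_incr : forall i, H i < H i.+1.
Hypothesis H_smooth : forall n, smooth p q n <-> exists i, H i = n.
Hypothesis H_exp : forall i, H i = p ^ alpha i * q ^ beta i.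
Hypothesis f_block : forall i n, H i <= n < H i.+1 -> f n = ((-1) ^+ (alpha i + beta i))%R.

Lemma H_leq : {mono H : i j / i <= j}.
Proof. exact/leq_mono/(homo_ltn ltn_trans H_incr). Qed.

Lemma H_ltn : {mono H : i j / i < j}.
Proof. exact: leqW_mono H_leq. Qed.

Lemma H0_eq1 : H 0 = 1.
Proof.
have [i Hi] : exists i, H i = 1 by apply/H_smooth; exists 0, 0.
have H0_gt0 : 0 < H 0.
  by apply: (smooth_gt0 (prime_gt0 p_prime) (prime_gt0 q_prime)); apply/H_smooth; exists 0.
by apply/eqP; rewrite eqn_leq H0_gt0 -Hi H_leq.
Qed.

Lemma H_block n : 0 < n -> exists i, H i <= n < H i.+1.
Proof.
elim: n => // -[_ _|n IHn _]; first by exists 0; move: (H_incr 0); rewrite H0_eq1 leqnn.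
have [i /andP[Hi_le n_lt]] := IHn isT.
case: (ltngtP n.+2 (H i.+1)) => [n_lt'|+|->].
- by exists i; rewrite n_lt' (leq_trans Hi_le).
- by rewrite ltnS leqNgt n_lt.
- by exists i.+1; rewrite leqnn H_incr.
Qed.

Lemma block_lt_smooth i n h : H i <= n < H i.+1 -> smooth p q h -> H i < h -> n < h.
Proof.
move=> /andP[_ n_lt] /H_smooth[k <-]; rewrite H_ltn => i_lt.
by rewrite (leq_trans n_lt) ?H_leq.
Qed.

Lemma smooth_le_block i n h : H i <= n < H i.+1 -> smooth p q h -> h <= n -> h <= H i.
Proof.
move=> i_block h_smooth h_le; rewrite leqNgt; apply/negP.
by move=> /(block_lt_smooth i_block h_smooth); rewrite ltnNge h_le.
Qed.

Lemma f_succ_fail n : f n.+1 != f n -> smooth p q n.+1.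
Proof.
case: n => [_|n]; first by exists 0, 0.
have [i /andP[Hi_le n_lt]] := H_block (ltn0Sn n).
case: (ltngtP n.+2 (H i.+1)) => [n_lt'|+|->]; last by move=> _; apply/H_smooth; exists i.+1.
  by rewrite !(f_block (i := i)) ?eqxx // ?n_lt' ?n_lt ?Hi_le ?(leq_trans Hi_le).
by rewrite ltnS leqNgt n_lt.
Qed.

(* If p divides H_j, then H_j = p H_i and f changes sign from n to p n;
   otherwise H_j is a power of q. *)
Lemma f_mul_fail n : 0 < n -> f (p * n) != (- f n)%R ->
  exists b, q ^ b <= p * n /\ forall h, smooth p q h -> q ^ b < h -> p * n < h.
Proof.
move=> n_gt0 f_ne; have p_gt0 := prime_gt0 p_prime.
have [i i_block] := H_block n_gt0.
have [j j_block] : exists j, H j <= p * n < H j.+1 by apply: H_block; rewrite muln_gt0 p_gt0.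
case: (posnP (alpha j)) => [alpha0|alpha_gt0].
  have Hj : H j = q ^ beta j by rewrite H_exp alpha0 mul1n.
  exists (beta j); rewrite -Hj; split; first by case/andP: j_block.
  by move=> h; apply: block_lt_smooth j_block.
have Hj_eq : H j = p * H i.
  set y := p ^ (alpha j).-1 * q ^ beta j.
  have Hj_y : H j = p * y by rewrite H_exp mulnA -expnS prednK.
  have y_le : y <= H i.
    apply: smooth_le_block i_block _ _; first by exists (alpha j).-1, (beta j).
    by rewrite -(leq_pmul2l p_gt0) -Hj_y; case/andP: j_block.
  apply/eqP; rewrite eqn_leq Hj_y leq_mul2l y_le orbT /= -Hj_y.
  apply: smooth_le_block j_block _ _; last by rewrite leq_pmul2l //; case/andP: i_block.
  have [a [b ->]] := proj2 (H_smooth _) (ex_intro _ i erefl).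
  by exists a.+1, b; rewrite expnS mulnA.
have [alpha_j beta_j] : alpha j = (alpha i).+1 /\ beta j = beta i.
  move: Hj_eq; rewrite !H_exp mulnA -expnS => e; split.
    by have := congr1 (logn p) e; rewrite !logn_smooth.
  by have := congr1 (logn q) e; rewrite ![_ ^ _ * q ^ _]mulnC !logn_smooth // eq_sym.
move: f_ne; rewrite (f_block i_block) (f_block j_block) alpha_j beta_j.
by rewrite addSn exprS mulN1r eqxx.
Qed.

Lemma sparse_f_succ_fail : sparse [pred n | f n.+1 != f n].
Proof. exact: sparse_smooth_succ (prime_gt1 p_prime) (prime_gt1 q_prime) f_succ_fail. Qed.

Lemma sparse_f_mul_fail : sparse [pred n | f (p * n) != (- f n)%R].
Proof. exact: sparse_before_next_smooth p_prime q_prime p_neq_q _ f_mul_fail. Qed.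

End Enumeration.

Theorem lemma4p2 (R : realType) (H alpha beta : nat -> nat) (f : nat -> int) :
  (forall i : nat, (H i < H i.+1)%N) ->
  (forall n : nat, three_smooth n <-> exists i : nat, H i = n) ->
  (forall i : nat, H i = (2 ^ alpha i * 3 ^ beta i)%N) ->
  f 0%N = 1 ->
  (forall i n : nat, (H i <= n < H i.+1)%N -> f n = (-1) ^+ (alpha i + beta i)) ->
  almost_all R [pred n : nat | [&& f n.+1 == f n,
                                  f (2 * n)%N == - f n &
                                  f (3 * n)%N == - f n]].
Proof.
move=> H_incr H_smooth H_exp _ f_block; apply: upper_density_sparse.
have H_smooth32 n : smooth 3 2 n <-> exists i, H i = n by rewrite smoothC; apply: H_smooth.
have H_exp32 i : H i = (3 ^ beta i * 2 ^ alpha i)%N by rewrite mulnC.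
have f_block32 i n : (H i <= n < H i.+1)%N -> f n = (-1) ^+ (beta i + alpha i).
  by rewrite addnC; apply: f_block.
have [prime2 prime3] : prime 2 /\ prime 3 by [].
apply: sparse_sub (sparseU (sparse_f_succ_fail prime2 prime3 H_incr H_smooth f_block)
  (sparseU (sparse_f_mul_fail prime2 prime3 isT H_incr H_smooth H_exp f_block)
           (sparse_f_mul_fail prime3 prime2 isT H_incr H_smooth32 H_exp32 f_block32))) => n.
by rewrite !inE !negb_and.
Qed.
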